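(* Let $\langle A;\cdot\rangle$ be a groupoid with an identity element which is an Abelian algebra. Then $\langle A;\cdot\rangle$ is a Hamiltonian algebra if and only if $\langle A;\cdot\rangle$ is a periodic commutative group (every element has finite order).
   Context: A groupoid is an algebra $\langle A;\cdot\rangle$ with one binary operation (its subalgebras are the nonempty subsets closed under $\cdot$); an identity element is $1\in A$ with $1\cdot a=a\cdot 1=a$ for all $a$. A polynomial operation of an algebra is an operation obtained from a term by substituting elements of the algebra for some of its variables. An algebra is called Abelian if for every polynomial operation $t(x,y_1,\ldots,y_n)$ and all elements $u,v,c_1,\ldots,c_n,d_1,\ldots,d_n$ of the algebra, $t(u,c_1,\ldots,c_n)=t(u,d_1,\ldots,d_n)$ implies $t(v,c_1,\ldots,c_n)=t(v,d_1,\ldots,d_n)$. An algebra is called Hamiltonian if the universe of every subalgebra is an equivalence class (block) of some congruence of the algebra. *)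

From Stdlib Require Import Arith.

Set Implicit Arguments.

(* Terms of the groupoid language in variables indexed by nat,
   with constants from A (for polynomial operations). *)
Inductive term (A : Type) : Type :=
| Var : nat -> term A
| Cst : A -> term A
| App : term A -> term A -> term A.

Arguments Var {A} _.

Fixpoint eval (A : Type) (op : A -> A -> A) (env : nat -> A) (t : term A) : A :=
  match t with
  | Var i => env i
  | Cst a => a
  | App t1 t2 => op (eval op env t1) (eval op env t2)
  end.

Definition cons_env (A : Type) (u : A) (c : nat -> A) : nat -> A :=
  fun i => match i with 0 => u | S j => c j end.

(* Polynomial operations t(x, y_1, ..., y_n) are exactly the maps
   (u, c) |-> eval op (cons_env u c) t for terms t with constants
   (only finitely many variables occur in t). *)
Definition Abelian (A : Type) (op : A -> A -> A) : Prop :=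
  forall (t : term A) (u v : A) (c d : nat -> A),
    eval op (cons_env u c) t = eval op (cons_env u d) t ->
    eval op (cons_env v c) t = eval op (cons_env v d) t.

Definition is_identity (A : Type) (op : A -> A -> A) (e : A) : Prop :=
  forall a, op e a = a /\ op a e = a.

Definition is_subalgebra (A : Type) (op : A -> A -> A) (S : A -> Prop) : Prop :=
  (exists a, S a) /\ (forall a b, S a -> S b -> S (op a b)).

Definition is_congruence (A : Type) (op : A -> A -> A) (R : A -> A -> Prop) : Prop :=
  (forall a, R a a) /\
  (forall a b, R a b -> R b a) /\
  (forall a b c, R a b -> R b c -> R a c) /\
  (forall a a' b b', R a a' -> R b b' -> R (op a b) (op a' b')).

Definition Hamiltonian (A : Type) (op : A -> A -> A) : Prop :=
  forall S : A -> Prop, is_subalgebra op S ->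
    exists (R : A -> A -> Prop) (a : A),
      is_congruence op R /\ (forall x, S x <-> R a x).

Fixpoint pw (A : Type) (op : A -> A -> A) (e : A) (x : A) (n : nat) : A :=
  match n with
  | 0 => e
  | S m => op x (pw op e x m)
  end.

Definition periodic_comm_group (A : Type) (op : A -> A -> A) (e : A) : Prop :=
  (forall a b c, op (op a b) c = op a (op b c)) /\
  (forall a b, op a b = op b a) /\
  is_identity op e /\
  (forall a, exists b, op a b = e /\ op b a = e) /\
  (forall a, exists n, 0 < n /\ pw op e a n = e).

(* An Abelian groupoid with identity e satisfies the term condition for
   t = y1 (x y2) and t = y1 x: the first, compared at x = e and x = v, yields
   a (v b) = (a b) v, whence commutativity and associativity; the second yields
   right cancellation. So A is a cancellative commutative monoid.
   If A is Hamiltonian, the subalgebra {a^2} u {a^n | n >= 4} is a block of a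
   congruence; multiplying a^2 ~ a^4 by a gives a^3 ~ a^5, so a^3 lies in the
   block and cancellation makes a periodic. Conversely, in a periodic abelian
   group every subalgebra is a subgroup, and it is the block of e for the coset
   congruence. *)
From Stdlib Require Import Lia.

Set Implicit Arguments.

Section AbelianIdentity.
Variables (A : Type) (op : A -> A -> A) (e : A).
Hypothesis he : is_identity op e.
Hypothesis hab : Abelian op.

Lemma op_e_l a : op e a = a. Proof. apply he. Qed.
Lemma op_e_r a : op a e = a. Proof. apply he. Qed.

Lemma abelian_exchange a v b : op a (op v b) = op (op a b) v.
Proof.
  pose (c := fun i : nat => match i with 0 => a | _ => b end).
  pose (d := fun i : nat => match i with 0 => op a b | _ => e end).
  pose proof (hab (App (Var 1) (App (Var 0) (Var 2))) e v c d) as Hterm.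
  cbn in Hterm. rewrite !op_e_l, !op_e_r in Hterm.
  exact (Hterm eq_refl).
Qed.

Lemma abelian_comm a b : op a b = op b a.
Proof. rewrite <- (op_e_l (op a b)), abelian_exchange, op_e_l. reflexivity. Qed.

Lemma abelian_assoc a b c : op (op a b) c = op a (op b c).
Proof. rewrite <- abelian_exchange, (abelian_comm c b). reflexivity. Qed.

Lemma abelian_cancel_r c d u : op c u = op d u -> c = d.
Proof.
  intro Hcd.
  pose proof (hab (App (Var 1) (Var 0)) u e (fun _ => c) (fun _ => d)) as Hterm.
  cbn in Hterm. rewrite !op_e_r in Hterm.
  exact (Hterm Hcd).
Qed.

End AbelianIdentity.

Section Monoid.
Variables (A : Type) (op : A -> A -> A) (e : A).
Hypothesis assoc : forall a b c, op (op a b) c = op a (op b c).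
Hypothesis he : is_identity op e.

Lemma pw_add a n m : pw op e a (n + m) = op (pw op e a n) (pw op e a m).
Proof.
  induction n as [|n IH]; cbn.
  - symmetry; apply he.
  - rewrite IH, assoc. reflexivity.
Qed.

Lemma subalgebra_pw_S (B : A -> Prop) s m :
  is_subalgebra op B -> B s -> B (pw op e s (S m)).
Proof.
  intros [_ closed] Bs; induction m as [|m IH]; cbn in *.
  - rewrite (proj2 (he s)). exact Bs.
  - apply closed; assumption.
Qed.

(* The powers a^2, a^4, a^5, ... : closed under products since sums of
   exponents from {2} u [4, oo) never equal 3. *)
Definition gap_powers (a : A) (x : A) : Prop :=
  exists n, (n = 2 \/ 4 <= n) /\ x = pw op e a n.

Lemma gap_powers_subalgebra a : is_subalgebra op (gap_powers a).
Proof.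
  split.
  - exists (pw op e a 2), 2. split; [left|]; reflexivity.
  - intros x y [n [Hn ->]] [m [Hm ->]]. exists (n + m).
    split; [lia | symmetry; apply pw_add].
Qed.

Hypothesis cancel_r : forall c d u, op c u = op d u -> c = d.

Lemma gap_powers_pw3 a : gap_powers a (pw op e a 3) -> exists n, 0 < n /\ pw op e a n = e.
Proof.
  intros [n [[-> | Hn] H3]].
  - assert (Ha : a = e).
    { apply (cancel_r (u := pw op e a 2)). rewrite (proj1 (he _)). exact H3. }
    exists 1. split; [lia|]. cbn. rewrite (proj2 (he a)). exact Ha.
  - exists (n - 3). split; [lia|].
    apply (cancel_r (u := pw op e a 3)).
    rewrite <- pw_add, (proj1 (he _)).
    replace (n - 3 + 3) with n by lia. symmetry; exact H3.
Qed.

Lemma hamiltonian_periodic : Hamiltonian op -> forall a, exists n, 0 < n /\ pw op e a n = e.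
Proof.
  intros hH a. apply gap_powers_pw3.
  destruct (hH _ (gap_powers_subalgebra a)) as [R [a0 [[Rrefl [Rsym [Rtrans Rop]]] block]]].
  assert (in_block : forall n, (n = 2 \/ 4 <= n) -> R a0 (pw op e a n)).
  { intros n Hn. apply block. exists n. split; [exact Hn | reflexivity]. }
  assert (R24 : R (pw op e a 2) (pw op e a 4)).
  { apply (Rtrans _ a0); [apply Rsym|]; apply in_block; lia. }
  assert (R35 : R (pw op e a 3) (pw op e a 5)) by (apply Rop; [apply Rrefl | exact R24]).
  apply block. apply (Rtrans _ (pw op e a 5)); [apply in_block; lia | apply Rsym; exact R35].
Qed.

End Monoid.

Section PeriodicAbelianGroup.
Variables (A : Type) (op : A -> A -> A) (e : A).
Hypothesis assoc : forall a b c, op (op a b) c = op a (op b c).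
Hypothesis comm : forall a b, op a b = op b a.
Hypothesis he : is_identity op e.
Hypothesis periodic : forall a, exists n, 0 < n /\ pw op e a n = e.

Variable B : A -> Prop.
Hypothesis subB : is_subalgebra op B.

Lemma periodic_subalgebra_unit : B e.
Proof.
  destruct subB as [[a Ba] _]. destruct (periodic a) as [[|n] [Hn Hp]]; [lia|].
  rewrite <- Hp. apply subalgebra_pw_S; assumption.
Qed.

Lemma periodic_subalgebra_inv s : B s -> exists s', B s' /\ op s' s = e.
Proof.
  intro Bs. destruct (periodic s) as [[|[|m]] [Hn Hp]]; [lia| |].
  - exists s. cbn in Hp. rewrite (proj2 (he s)) in Hp. subst s.
    split; [exact periodic_subalgebra_unit | apply he].
  - exists (pw op e s (S m)). split; [apply subalgebra_pw_S; assumption|].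
    rewrite comm. exact Hp.
Qed.

Definition coset_rel (x y : A) : Prop := exists s, B s /\ y = op s x.

Lemma coset_rel_congruence : is_congruence op coset_rel.
Proof.
  destruct subB as [_ closed].
  split; [|split; [|split]].
  - intro a. exists e. split; [exact periodic_subalgebra_unit | symmetry; apply he].
  - intros a b [s [Bs ->]]. destruct (periodic_subalgebra_inv Bs) as [s' [Bs' Hs']].
    exists s'. split; [exact Bs'|]. rewrite <- assoc, Hs'. symmetry; apply he.
  - intros a b c [s [Bs ->]] [t [Bt ->]]. exists (op t s).
    split; [apply closed; assumption | rewrite assoc; reflexivity].
  - intros a a' b b' [s [Bs ->]] [t [Bt ->]]. exists (op s t).
    split; [apply closed; assumption|].
    rewrite !assoc. f_equal. rewrite <- !assoc. f_equal. apply comm.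
Qed.

Lemma coset_rel_block_unit x : B x <-> coset_rel e x.
Proof.
  split.
  - intro Bx. exists x. split; [exact Bx | symmetry; apply he].
  - intros [s [Bs ->]]. rewrite (proj2 (he s)). exact Bs.
Qed.

End PeriodicAbelianGroup.

Lemma periodic_comm_group_hamiltonian (A : Type) (op : A -> A -> A) (e : A) :
  periodic_comm_group op e -> Hamiltonian op.
Proof.
  intros [assoc [comm [he [_ periodic]]]] B subB.
  exists (coset_rel op B), e. split.
  - exact (coset_rel_congruence assoc comm he periodic subB).
  - apply coset_rel_block_unit; exact he.
Qed.

Unset Implicit Arguments.

Theorem mainTheorem5 (A : Type) (op : A -> A -> A) (e : A)
  (he : is_identity op e) (hab : Abelian op) :
  Hamiltonian op <-> periodic_comm_group op e.
Proof.
  split; [|apply periodic_comm_group_hamiltonian].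
  intro hH.
  pose proof (abelian_assoc he hab) as assoc.
  pose proof (abelian_comm he hab) as comm.
  pose proof (hamiltonian_periodic assoc he (abelian_cancel_r he hab) hH) as periodic.
  split; [exact assoc | split; [exact comm | split; [exact he | split; [|exact periodic]]]].
  intro a. destruct (periodic a) as [[|n] [Hn Hp]]; [lia|].
  exists (pw op e a n). split; [exact Hp | rewrite comm; exact Hp].
Qed.
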